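(* For all integers $m,n\geq 3$, with $T_{m,n}=C_m\Box C_n$, we have $\chi_i(T_{m,n})\geq 5$. Moreover, $\chi_i(T_{m,n})=5$ if and only if $m\equiv 0\pmod 5$ and $n\equiv 0 \pmod 5$.
   Context: For a graph $G$, an incidence is a pair $(v,e)$ with $v\in V(G)$, $e\in E(G)$ and $v$ incident with $e$. Two incidences $(v,e)$ and $(w,f)$ are adjacent if $v=w$, or $e=f$, or the edge $vw$ equals $e$ or $f$. An incidence $k$-coloring of $G$ is a map from the set of incidences of $G$ to a set of $k$ colors such that adjacent incidences receive distinct colors; the incidence chromatic number $\chi_i(G)$ is the least such $k$. $C_n$ denotes the cycle on $n$ vertices and $\Box$ the Cartesian product of graphs: $G\Box H$ has vertex set $V(G)\times V(H)$, with $(u_1,v_1)$ adjacent to $(u_2,v_2)$ iff either $u_1=u_2$ and $v_1v_2\in E(H)$, or $v_1=v_2$ and $u_1u_2\in E(G)$. *)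

From mathcomp Require Import all_boot.
Set Implicit Arguments. Unset Strict Implicit. Unset Printing Implicit Defensive.

(* A simple graph: a finite vertex type V with a symmetric irreflexive
   adjacency relation adj.  Edges are 2-element vertex sets {x,y} with adj x y. *)
Definition is_edge (V : finType) (adj : rel V) (e : {set V}) : bool :=
  [exists x, exists y, adj x y && (e == [set x; y])].

Definition is_incidence (V : finType) (adj : rel V) (a : V * {set V}) : bool :=
  is_edge adj a.2 && (a.1 \in a.2).

Definition inc_adj (V : finType) (a b : V * {set V}) : bool :=
  [|| a.1 == b.1, a.2 == b.2, [set a.1; b.1] == a.2 | [set a.1; b.1] == b.2].

Definition incidence_coloring (V : finType) (adj : rel V) (k : nat)
    (f : {ffun V * {set V} -> 'I_k}) : bool :=
  [forall a, forall b,
     [&& is_incidence adj a, is_incidence adj b, a != b & inc_adj a b]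
       ==> (f a != f b)].

Definition incidence_colorable (V : finType) (adj : rel V) (k : nat) : bool :=
  [exists f : {ffun V * {set V} -> 'I_k}, incidence_coloring adj f].

Lemma incidence_colorable_exists (V : finType) (adj : rel V) :
  exists k, incidence_colorable adj k.
Proof.
exists #|{: V * {set V}}|; apply/existsP.
exists [ffun a => enum_rank a]; apply/forallP => a; apply/forallP => b.
apply/implyP => /and4P [_ _ nab _]; rewrite !ffunE.
by apply: contra nab => /eqP /enum_rank_inj ->.
Qed.

Definition incidence_chromatic_number (V : finType) (adj : rel V) : nat :=
  ex_minn (incidence_colorable_exists adj).

(* The cycle C_m on vertex set 'I_m (a genuine cycle for m >= 3). *)
Definition cycle_adj (m : nat) : rel 'I_m :=
  fun i j => (val j == (val i).+1 %% m) || (val i == (val j).+1 %% m).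
Arguments cycle_adj m : clear implicits.

Definition box_adj (U W : finType) (g : rel U) (h : rel W) : rel (U * W) :=
  fun x y => ((x.1 == y.1) && h x.2 y.2) || ((x.2 == y.2) && g x.1 y.1).

Definition torus_adj (m n : nat) : rel ('I_m * 'I_n) :=
  box_adj (cycle_adj m) (cycle_adj n).
Arguments torus_adj m n : clear implicits.

From Stdlib Require Import ZArith Lia.
From mathcomp Require Import all_boot zify.
Set Implicit Arguments. Unset Strict Implicit. Unset Printing Implicit Defensive.

(* Around a vertex x of a 4-regular graph, the four incidences (x, xy) and
   any incidence (w, wx) are pairwise adjacent.  Hence at least 5 colours are
   needed, and in a 5-colouring all incidences (w, wx) share the colour c(x)
   missing from the (x, xy); as (x, xy) itself enters y, it has colour c(y),
   so c is injective on every closed neighbourhood.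
   Lifted to Z^2, such a c repeats each colour along one of the two lattices
   spanned by (1,2), (2,-1) or by (2,1), (1,-2); both contain (5,0) and (0,5)
   but no nonzero horizontal or vertical vector of length at most 4, so the
   periods m and n of the lift are multiples of 5.  Conversely, if 5 divides
   m and n, then c(i,j) = i + 2j mod 5 is injective on closed neighbourhoods
   and colouring (v, vw) by c(w) is an incidence 5-colouring. *)

Lemma uniq_size_ord k (s : seq 'I_k) : uniq s -> size s <= k.
Proof.
move=> s_uniq; rewrite -[leqRHS](size_enum_ord k).
by apply: uniq_leq_size => // i; rewrite mem_enum.
Qed.

Lemma uniq_cons_full k (s : seq 'I_k) a b :
  k <= (size s).+1 -> uniq (a :: s) -> uniq (b :: s) -> a = b.
Proof.
move=> k_le /andP[a_notin s_uniq] /andP[b_notin _].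
apply/eqP/negPn/negP => neq_ab.
have : uniq [:: a, b & s] by rewrite /= inE negb_or neq_ab a_notin b_notin.
by move/uniq_size_ord => /=; lia.
Qed.

Lemma edge_incidence (V : finType) (adj : rel V) x y :
  adj x y -> is_incidence adj (x, [set x; y]).
Proof.
move=> adj_xy; apply/andP; split; last by rewrite /= set21.
by apply/existsP; exists x; apply/existsP; exists y; rewrite adj_xy eqxx.
Qed.

Section IncidenceColoring.
Variables (V : finType) (adj : rel V) (k : nat) (f : {ffun V * {set V} -> 'I_k}).
Hypothesis f_col : incidence_coloring adj f.

Lemma incidence_coloring_neq a b : is_incidence adj a -> is_incidence adj b ->
  a != b -> inc_adj a b -> f a != f b.
Proof.
move=> a_inc b_inc neq_ab adj_ab.
move/forallP: f_col => /(_ a) /forallP /(_ b) /implyP; apply.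
by rewrite a_inc b_inc neq_ab adj_ab.
Qed.

Lemma out_colors_neq x y y' : adj x y -> adj x y' -> y != x -> y != y' ->
  f (x, [set x; y]) != f (x, [set x; y']).
Proof.
move=> adj_xy adj_xy' neq_yx neq_yy'.
apply: incidence_coloring_neq; rewrite ?edge_incidence //; last first.
  by rewrite /inc_adj /= eqxx.
apply/negP => /eqP [] edge_eq.
have : y \in [set x; y'] by rewrite -edge_eq set22.
by rewrite !inE (negbTE neq_yx) (negbTE neq_yy').
Qed.

Lemma out_in_colors_neq x y w : adj x y -> adj w x -> w != x ->
  f (x, [set x; y]) != f (w, [set w; x]).
Proof.
move=> adj_xy adj_wx neq_wx.
apply: incidence_coloring_neq; rewrite ?edge_incidence //; last first.
  by rewrite /inc_adj /= (setUC [set x] [set w]) eqxx !orbT.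
by apply/negP => /eqP [] eq_xw; rewrite eq_xw eqxx in neq_wx.
Qed.

Lemma star_colors_uniq x s w : uniq (x :: s) ->
  (forall y, y \in s -> adj x y && adj y x) -> w \in s ->
  uniq (f (w, [set w; x]) :: [seq f (x, [set x; y]) | y <- s]).
Proof.
move=> xs_uniq nbr w_in.
have /andP[x_notin s_uniq] : (x \notin s) && uniq s by rewrite -cons_uniq.
have neq_x y : y \in s -> y != x by apply: contraTneq => ->.
have [_ adj_wx] := andP (nbr w w_in).
rewrite cons_uniq map_inj_in_uniq ?s_uniq ?andbT.
  apply/negP => /mapP [y y_in] /eqP; apply/negP; rewrite eq_sym.
  by apply: out_in_colors_neq; rewrite ?neq_x //; case/andP: (nbr y y_in).
move=> y y' y_in y'_in /eqP; apply: contraTeq => neq_yy'.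
have [adj_xy _] := andP (nbr y y_in); have [adj_xy' _] := andP (nbr y' y'_in).
by apply: out_colors_neq; rewrite ?neq_x.
Qed.

Lemma in_colors_eq x s w w' : k <= (size s).+1 -> uniq (x :: s) ->
  (forall y, y \in s -> adj x y && adj y x) -> w \in s -> w' \in s ->
  f (w, [set w; x]) = f (w', [set w'; x]).
Proof.
move=> k_le s_uniq nbr w_in w'_in.
rewrite -(size_map (fun y => f (x, [set x; y]))) in k_le.
apply: (uniq_cons_full k_le).
- by apply: star_colors_uniq.
- by apply: star_colors_uniq.
Qed.

End IncidenceColoring.

Section SquareColoring.
Variables (V : finType) (adj : rel V).
Hypothesis adj_sym : forall x y, adj x y -> adj y x.
Hypothesis adj_irr : forall x y, adj x y -> x != y.
Variables (k : nat) (c : V -> 'I_k).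
Hypothesis c_adj : forall x y, adj x y -> c x != c y.
Hypothesis c_nbr : forall v y y', adj v y -> adj v y' -> y != y' -> c y != c y'.

Definition other_end (v : V) (e : {set V}) : V := odflt v [pick w in e :\ v].

Lemma other_endE v w : v != w -> other_end v [set v; w] = w.
Proof.
move=> neq_vw; rewrite /other_end; case: pickP => [z|].
  by rewrite !inE => /andP[/negbTE -> /eqP].
by move/(_ w); rewrite !inE eqxx orbT andbT eq_sym neq_vw.
Qed.

Lemma incidence_as_edge a : is_incidence adj a -> exists2 w, adj a.1 w & a.2 = [set a.1; w].
Proof.
case/andP => /existsP[x /existsP[y /andP[adj_xy /eqP ->]]].
case/set2P => ->; first by exists y.
by exists x; [apply: adj_sym | rewrite setUC].
Qed.

Lemma incidence_coloring_of_square :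
  incidence_coloring adj [ffun a => c (other_end a.1 a.2)].
Proof.
apply/forallP => -[v e]; apply/forallP => -[v' e']; apply/implyP.
case/and4P => /incidence_as_edge [w /= adj_vw ->] /incidence_as_edge [w' /= adj_vw' ->] neq.
rewrite !ffunE /= !other_endE ?adj_irr //.
have [eq_vv'|neq_vv'] := eqVneq v v'.
  move=> _; subst v'; apply: c_nbr adj_vw adj_vw' _.
  by apply: contraNneq neq => ->.
have other_in_edge x y z : x != y -> x \in [set y; z] -> x = z.
  by move=> neq_xy /set2P[eq_xy|//]; rewrite eq_xy eqxx in neq_xy.
have neq_v'v : v' != v by rewrite eq_sym.
rewrite /inc_adj /= (negbTE neq_vv') /=.
case/or3P => /eqP e_eq.
- have eq_vw' : v = w' by apply: other_in_edge neq_vv' _; rewrite -e_eq set21.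
  have eq_v'w : v' = w by apply: other_in_edge neq_v'v _; rewrite e_eq set21.
  by subst w w'; rewrite eq_sym c_adj.
- have eq_v'w : v' = w by apply: other_in_edge neq_v'v _; rewrite -e_eq set22.
  by subst w; rewrite c_adj.
- have eq_vw' : v = w' by apply: other_in_edge neq_vv' _; rewrite -e_eq set21.
  by subst w'; rewrite eq_sym c_adj.
Qed.

End SquareColoring.

Section RainbowPlane.
Local Open Scope Z_scope.

Definition rainbow (h : Z -> Z -> 'I_5) : Prop :=
  forall i j, uniq [:: h i j; h (i+1) j; h (i-1) j; h i (j+1); h i (j-1)].

Lemma rainbow_transpose h : rainbow h -> rainbow (fun i j => h j i).
Proof.
move=> h_rainbow i j; apply: etrans _ (h_rainbow j i); apply: perm_uniq.
by rewrite perm_cons (perm_catC [:: _; _] [:: _; _]).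
Qed.

Variable h : Z -> Z -> 'I_5.
Hypothesis h_rainbow : rainbow h.

Lemma color_in_closed_nbhd i j x :
  exists a b, h a b = x /\ Z.abs (a - i) + Z.abs (b - j) <= 1.
Proof.
have colors_uniq := h_rainbow i j.
set colors := [:: _; _; _; _; _] in colors_uniq.
have : x \in colors.
  apply: contraT => x_notin.
  have := uniq_size_ord (s := x :: colors).
  by rewrite cons_uniq x_notin colors_uniq => /(_ isT).
by rewrite !inE => /orP[|/or4P[]] /eqP ->;
  (eexists _, _; split; [reflexivity | lia]).
Qed.

Lemma closed_nbhd_colors_neq i j a b c d :
  Z.abs (a - i) + Z.abs (b - j) <= 1 -> Z.abs (c - i) + Z.abs (d - j) <= 1 ->
  a <> c \/ b <> d -> h a b <> h c d.
Proof.
have near p q : Z.abs (p - i) + Z.abs (q - j) <= 1 ->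
    (p = i /\ q = j) \/ (p = i+1 /\ q = j) \/ (p = i-1 /\ q = j) \/
    (p = i /\ q = j+1) \/ (p = i /\ q = j-1) by lia.
move=> /near [[-> ->]|[[-> ->]|[[-> ->]|[[-> ->]|[-> ->]]]]]
       /near [[-> ->]|[[-> ->]|[[-> ->]|[[-> ->]|[-> ->]]]]] neq eq_h; try lia;
  by move: (h_rainbow i j); rewrite /= eq_h !inE !eqxx ?orbT ?andbF.
Qed.

Lemma color_eq_far a b c d x : h a b = x -> h c d = x ->
  a <> c \/ b <> d -> 2 < Z.abs (a - c) + Z.abs (b - d).
Proof.
move=> eq_ab eq_cd neq; apply/Z.lt_nge => dist_le2.
have [p [q [near_ab near_cd]]] : exists p q,
    Z.abs (a - p) + Z.abs (b - q) <= 1 /\ Z.abs (c - p) + Z.abs (d - q) <= 1.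
  have [lt_ac|[eq_ac|lt_ca]] := Z.lt_total a c.
  - by exists (c - 1), d; lia.
  - have [lt_bd|[eq_bd|lt_db]] := Z.lt_total b d.
    + by exists c, (d - 1); lia.
    + by lia.
    + by exists c, (d + 1); lia.
  - by exists (c + 1), d; lia.
exact: closed_nbhd_colors_neq near_ab near_cd neq (etrans eq_ab (esym eq_cd)).
Qed.

Ltac far_apart := exfalso; match goal with
  | H1 : h ?a ?b = ?x, H2 : h ?c ?d = ?x |- _ => have := color_eq_far H1 H2; lia
  | H1 : h ?a ?b = h ?c ?d |- _ => have := color_eq_far H1 (erefl _); lia
  end.

Lemma knight_move i j s t a b c d : Z.abs s = 1 -> Z.abs t = 1 ->
  a = i + s -> b = j + 2 * t -> c = i + 2 * s -> d = j + t ->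
  h a b = h i j \/ h c d = h i j.
Proof.
move=> s1 t1 -> -> -> ->.
(* The colour of (i,j) occurs around (i+s,j+t), where only the two knight
   moves from (i,j) are more than 2 away from (i,j). *)
have [p [q [eq_pq near_pq]]] := color_in_closed_nbhd (i + s) (j + t) (h i j).
have far := color_eq_far eq_pq (erefl _).
have [[<- <-]|[<- <-]] : (p = i + s /\ q = j + 2 * t) \/ (p = i + 2 * s /\ q = j + t)
  by lia.
- by left.
- by right.
Qed.

(* The two perfect codes of Z^2 through (i,j) are its translates by the
   lattice spanned by (1,2), (2,-1), resp. by (2,1), (1,-2); these are their
   four points nearest to (i,j). *)
Definition knightA i j :=
  [/\ h (i+1) (j+2) = h i j, h (i+2) (j-1) = h i j,
      h (i-1) (j-2) = h i j & h (i-2) (j+1) = h i j].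
Definition knightB i j :=
  [/\ h (i+2) (j+1) = h i j, h (i+1) (j-2) = h i j,
      h (i-2) (j-1) = h i j & h (i-1) (j+2) = h i j].

Lemma knightA_or_B i j : knightA i j \/ knightB i j.
Proof.
have [?|?] : h (i+1) (j+2) = h i j \/ h (i+2) (j+1) = h i j.
  by apply: (knight_move (s := 1) (t := 1)); lia.
all: have [?|?] : h (i+1) (j-2) = h i j \/ h (i+2) (j-1) = h i j;
  first by apply: (knight_move (s := 1) (t := (-1))); lia.
all: have [?|?] : h (i-1) (j+2) = h i j \/ h (i-2) (j+1) = h i j;
  first by apply: (knight_move (s := (-1)) (t := 1)); lia.
all: have [?|?] : h (i-1) (j-2) = h i j \/ h (i-2) (j-1) = h i j;
  first by apply: (knight_move (s := (-1)) (t := (-1))); lia.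
(* Each of the other 14 combinations puts one colour twice within distance 2. *)
all: first [by left; split | by right; split | far_apart].
Qed.

Lemma knightA_shift i j : knightA i j -> knightA (i+1) (j+2) /\ knightA (i+2) (j-1).
Proof.
case=> E12 E2m1 _ _; split.
- have [//|[_ _ F _]] := knightA_or_B (i+1) (j+2); rewrite E12 in F; far_apart.
- have [//|[_ _ _ F]] := knightA_or_B (i+2) (j-1); rewrite E2m1 in F; far_apart.
Qed.

Lemma knightB_shift i j : knightB i j -> knightB (i+2) (j+1) /\ knightB (i+1) (j-2).
Proof.
case=> E21 E1m2 _ _; split.
- have [[_ _ _ F]|//] := knightA_or_B (i+2) (j+1); rewrite E21 in F; far_apart.
- have [[_ _ _ F]|//] := knightA_or_B (i+1) (j-2); rewrite E1m2 in F; far_apart.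
Qed.

Lemma color_period5 i j : h (i+5) j = h i j.
Proof.
have [KA|KB] := knightA_or_B i j.
- have [KA1 _] := knightA_shift KA; have [_ KA2] := knightA_shift KA1.
  case: KA KA1 KA2 => [E1 _ _ _] [_ E2 _ _] [_ E3 _ _].
  by rewrite -E1 -E2 -E3; f_equal; lia.
- have [KB1 _] := knightB_shift KB; have [KB2 _] := knightB_shift KB1.
  case: KB KB1 KB2 => [E1 _ _ _] [E2 _ _ _] [_ E3 _ _].
  by rewrite -E1 -E2 -E3; f_equal; lia.
Qed.

Lemma color_period5_mul i j (q : nat) : h (i + 5 * Z.of_nat q) j = h i j.
Proof.
elim: q => [|q IHq]; first by f_equal; lia.
by rewrite -IHq -(color_period5 (i + 5 * Z.of_nat q)); f_equal; lia.
Qed.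

Lemma color_period_mod5 M : 0 <= M -> (forall i j, h (i + M) j = h i j) -> M mod 5 = 0.
Proof.
move=> M_ge0 h_periodic.
have [q [r [eq_M r_bound]]] : exists (q : nat) r, M = 5 * Z.of_nat q + r /\ 0 <= r < 5.
  by exists (Z.to_nat (M / 5)), (M mod 5); Z.to_euclidean_division_equations; lia.
subst M.
have Er : h r 0 = h 0 0.
  by rewrite -(color_period5_mul r 0 q) -(h_periodic 0 0); f_equal; lia.
have E5 : h 5 0 = h 0 0 by rewrite -(color_period5 0 0).
have := color_eq_far Er (erefl _); have := color_eq_far Er E5.
Z.to_euclidean_division_equations; lia.
Qed.

End RainbowPlane.

Section OrdOfZ.
Variable m : nat.
Hypothesis m_gt0 : 0 < m.
Local Notation M := (Z.of_nat m).

Definition ord_of_Z (i : Z) : 'I_m := Ordinal (ltn_pmod (Z.to_nat (i mod M)) m_gt0).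

Lemma ord_of_Z_val i : Z.of_nat (ord_of_Z i) = (i mod M)%Z.
Proof.
have bound : (0 <= i mod M < M)%Z by apply: Z.mod_pos_bound; lia.
by rewrite /= modn_small; lia.
Qed.

Lemma ord_of_Z_succ i : nat_of_ord (ord_of_Z (i + 1)) = (ord_of_Z i).+1 %% m.
Proof.
apply: Nat2Z.inj; rewrite ord_of_Z_val.
have val_i := ord_of_Z_val i; have lt_im := ltn_ord (ord_of_Z i).
have div_i := Z.div_mod i M ltac:(lia).
case: (ltngtP (ord_of_Z i).+1 m) => [lt_i1m|lt_mi1|eq_i1m].
- rewrite modn_small //; symmetry; apply: (Z.mod_unique _ _ (i / M)); lia.
- lia.
- rewrite eq_i1m modnn; symmetry; apply: (Z.mod_unique _ _ (i / M + 1)); lia.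
Qed.

Lemma ord_of_Z_addM i : ord_of_Z (i + M) = ord_of_Z i.
Proof.
apply: val_inj; apply: Nat2Z.inj; rewrite !ord_of_Z_val.
by rewrite -{1}(Z.mul_1_l M) Z.mod_add; lia.
Qed.

Lemma ord_of_Z_eqF a b : (0 < Z.abs (a - b) < M)%Z -> (ord_of_Z a == ord_of_Z b) = false.
Proof.
move=> dist_ab; apply/negP => /eqP /(congr1 (fun x => Z.of_nat (nat_of_ord x))).
rewrite /= !ord_of_Z_val => eq_mod.
have : (a - b = M * (a / M - b / M))%Z.
  by have := Z.div_mod a M; have := Z.div_mod b M; lia.
move: (a / M - b / M)%Z => d eq_ab; rewrite eq_ab in dist_ab.
by case: (Z.lt_total d 0) => [|[|]]; nia.
Qed.

Lemma cycle_adj_ord_of_Z_succ i :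
  cycle_adj m (ord_of_Z i) (ord_of_Z (i + 1)) && cycle_adj m (ord_of_Z (i + 1)) (ord_of_Z i).
Proof.
have succ_i := ord_of_Z_succ i.
by apply/andP; split; apply/orP; [left|right]; apply/eqP.
Qed.

Lemma cycle_adj_ord_of_Z_pred i :
  cycle_adj m (ord_of_Z i) (ord_of_Z (i - 1)) && cycle_adj m (ord_of_Z (i - 1)) (ord_of_Z i).
Proof. by rewrite andbC; have := cycle_adj_ord_of_Z_succ (i - 1); rewrite Z.sub_add. Qed.

End OrdOfZ.

Definition cycle_step p (a b : nat) :=
  b = a.+1 \/ (b = 0 /\ a.+1 = p) \/ a = b.+1 \/ (a = 0 /\ b.+1 = p).

Lemma cycle_adj_step p (a b : 'I_p) : cycle_adj p a b -> cycle_step p a b.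
Proof.
have succ_mod (x : 'I_p) : x.+1 %% p = x.+1 \/ (x.+1 %% p = 0 /\ x.+1 = p).
  case: (ltngtP x.+1 p) => [lt_xp|lt_px|->]; first by left; rewrite modn_small.
  - by have := ltn_ord x; lia.
  - by right; rewrite modnn.
rewrite /cycle_adj /cycle_step => /orP[] /eqP ->.
- by case: (succ_mod a) => [|[]] ->; lia.
- by case: (succ_mod b) => [|[]] ->; lia.
Qed.

Section Torus.
Variables m n : nat.
Hypotheses (m_ge3 : 3 <= m) (n_ge3 : 3 <= n).
Let m_gt0 : 0 < m := leq_trans (isT : 0 < 3) m_ge3.
Let n_gt0 : 0 < n := leq_trans (isT : 0 < 3) n_ge3.
Local Notation adj := (torus_adj m n).

Definition torus_pt (i j : Z) : 'I_m * 'I_n := (ord_of_Z m_gt0 i, ord_of_Z n_gt0 j).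

Definition torus_nbrs i j :=
  [:: torus_pt (i + 1) j; torus_pt (i - 1) j; torus_pt i (j + 1); torus_pt i (j - 1)].

Lemma torus_nbrs_adj i j y :
  y \in torus_nbrs i j -> adj (torus_pt i j) y && adj y (torus_pt i j).
Proof.
rewrite !inE => /or4P[] /eqP ->; rewrite /torus_adj /box_adj /= eqxx /=.
- by case/andP: (cycle_adj_ord_of_Z_succ m_gt0 i) => -> ->; rewrite !orbT.
- by case/andP: (cycle_adj_ord_of_Z_pred m_gt0 i) => -> ->; rewrite !orbT.
- by case/andP: (cycle_adj_ord_of_Z_succ n_gt0 j) => -> ->.
- by case/andP: (cycle_adj_ord_of_Z_pred n_gt0 j) => -> ->.
Qed.

Lemma torus_closed_nbhd_uniq i j : uniq (torus_pt i j :: torus_nbrs i j).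
Proof. by rewrite /= !inE !xpair_eqE !eqxx /= !ord_of_Z_eqF //; lia. Qed.

Section FiveColoring.
Variable f : {ffun 'I_m * 'I_n * {set 'I_m * 'I_n} -> 'I_5}.
Hypothesis f_col : incidence_coloring adj f.

Definition in_color i j := f (torus_pt (i - 1) j, [set torus_pt (i - 1) j; torus_pt i j]).

Lemma in_color_eq i j w : w \in torus_nbrs i j ->
  f (w, [set w; torus_pt i j]) = in_color i j.
Proof.
move=> w_in; apply: (in_colors_eq f_col _ (torus_closed_nbhd_uniq i j)) => //.
- exact: torus_nbrs_adj.
- by rewrite !inE eqxx orbT.
Qed.

Lemma in_color_rainbow : rainbow in_color.
Proof.
move=> i j.
have <- : [seq f (torus_pt i j, [set torus_pt i j; y]) | y <- torus_nbrs i j] =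
    [:: in_color (i + 1) j; in_color (i - 1) j; in_color i (j + 1); in_color i (j - 1)].
  rewrite /= !in_color_eq // !inE ?Z.add_simpl_r ?Z.sub_add eqxx ?orbT //.
apply: (star_colors_uniq f_col (torus_closed_nbhd_uniq i j)).
- exact: torus_nbrs_adj.
- by rewrite !inE eqxx orbT.
Qed.

Lemma torus_periods_mod5 : m %% 5 = 0 /\ n %% 5 = 0.
Proof.
have period_m i j : in_color (i + Z.of_nat m) j = in_color i j.
  rewrite /in_color /torus_pt ord_of_Z_addM.
  by rewrite (_ : (i + Z.of_nat m - 1 = i - 1 + Z.of_nat m)%Z) ?ord_of_Z_addM //; lia.
have period_n i j : in_color i (j + Z.of_nat n) = in_color i j.
  by rewrite /in_color /torus_pt ord_of_Z_addM.
have := color_period_mod5 in_color_rainbow (M := Z.of_nat m) ltac:(lia) period_m.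
have := color_period_mod5 (rainbow_transpose in_color_rainbow) (M := Z.of_nat n) ltac:(lia)
  (fun i j => period_n j i).
split; Z.to_euclidean_division_equations; lia.
Qed.

End FiveColoring.

Lemma torus_colors_ge5 k (f : {ffun 'I_m * 'I_n * {set 'I_m * 'I_n} -> 'I_k}) :
  incidence_coloring adj f -> 5 <= k.
Proof.
move=> f_col.
have := star_colors_uniq f_col (torus_closed_nbhd_uniq 0 0) (@torus_nbrs_adj 0 0).
by move=> /(_ _ (mem_head _ _)) /uniq_size_ord.
Qed.

Lemma torus_adj_cases x y : adj x y ->
  (x.1 = y.1 :> nat /\ cycle_step n x.2 y.2) \/ (x.2 = y.2 :> nat /\ cycle_step m x.1 y.1).
Proof.
by rewrite /torus_adj /box_adj => /orP[] /andP[/eqP -> /cycle_adj_step]; [left|right].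
Qed.

Lemma torus_adj_sym x y : adj x y -> adj y x.
Proof.
rewrite /torus_adj /box_adj /cycle_adj.
by case/orP => /andP[/eqP -> ?]; apply/orP; [left|right]; rewrite eqxx orbC.
Qed.

Lemma torus_adj_irr x y : adj x y -> x != y.
Proof. by move=> /torus_adj_cases; apply: contraPneq => ->; rewrite /cycle_step; lia. Qed.

Definition diag_color (v : 'I_m * 'I_n) : 'I_5 :=
  Ordinal (ltn_pmod (v.1 + 2 * v.2) (isT : 0 < 5)).

Section DiagColor.
Hypotheses (m_mod5 : m %% 5 = 0) (n_mod5 : n %% 5 = 0).

Lemma diag_color_adj x y : adj x y -> diag_color x != diag_color y.
Proof.
case: x y => [x1 x2] [y1 y2] /torus_adj_cases /= adj_xy.
apply/negP => /eqP /(congr1 val) /=.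
have := ltn_ord x1; have := ltn_ord x2; have := ltn_ord y1; have := ltn_ord y2.
by move: adj_xy m_mod5 n_mod5; rewrite /cycle_step; lia.
Qed.

Lemma diag_color_nbr v x y : adj v x -> adj v y -> x != y ->
  diag_color x != diag_color y.
Proof.
case: v x y => [v1 v2] [x1 x2] [y1 y2] /torus_adj_cases /= adj_vx /torus_adj_cases /= adj_vy.
rewrite xpair_eqE negb_and => neq_xy; apply/negP => /eqP /(congr1 val) /=.
have {}neq_xy : (x1 : nat) <> y1 \/ (x2 : nat) <> y2.
  by case/orP: neq_xy => /eqP neq; [left|right] => /val_inj.
have := ltn_ord x1; have := ltn_ord x2; have := ltn_ord y1; have := ltn_ord y2.
have := ltn_ord v1; have := ltn_ord v2.
by move: adj_vx adj_vy neq_xy m_mod5 n_mod5; rewrite /cycle_step; lia.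
Qed.

Lemma torus_colorable5 : incidence_colorable adj 5.
Proof.
apply/existsP; exists [ffun a => diag_color (other_end a.1 a.2)].
apply: incidence_coloring_of_square.
- exact: torus_adj_sym.
- exact: torus_adj_irr.
- exact: diag_color_adj.
- exact: diag_color_nbr.
Qed.

End DiagColor.
End Torus.

Theorem corollary1 (m n : nat) (hm : 3 <= m) (hn : 3 <= n) :
  5 <= incidence_chromatic_number (torus_adj m n) /\
  (incidence_chromatic_number (torus_adj m n) = 5 <->
     (m %% 5 = 0 /\ n %% 5 = 0)).
Proof.
rewrite /incidence_chromatic_number; case: ex_minnP => k /existsP [f f_col] k_min.
have k_ge5 := torus_colors_ge5 hm hn f_col.
split => //; split => [eq_k5 | [m_mod5 n_mod5]].
- by subst k; apply: torus_periods_mod5 f_col.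
- by apply/eqP; rewrite eqn_leq k_ge5 andbT k_min // torus_colorable5.
Qed.
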